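(* There is an absolute constant $C_2$ such that for all $p\in(0,0.1)$, with $q=-\log(1-p)$ and $B=\lfloor q^{-1}\log q^{-1}\rfloor$, we have $B\,g(Bq/2)\le C_2\log q^{-1}$.
   Context: $\beta(u)=\frac{u+\sqrt{u(4-3u)}}{2}$ and $g(z)=-\log\beta(1-e^{-z})$ for $z>0$. *)

From Stdlib Require Import Reals.
Open Scope R_scope.

Definition beta (u : R) : R := (u + sqrt (u * (4 - 3 * u))) / 2.

Definition g (z : R) : R := - ln (beta (1 - exp (- z))).

(* With e = exp(-z), one has beta(1 - e) >= 1 - e^2, hence g z <= -ln(1 - e^2) <= 2 e^2
   = 2 exp(-2z) once e^2 <= 1/2.  For z = Bq/2 the choice of B gives Bq > ln(1/q) - q,
   so exp(-Bq) <= q e^q = q/(1-p), and B g(Bq/2) <= 2 Bq/(1-p) <= (20/9) ln(1/q). *)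
From Stdlib Require Import Reals Lra Lia Psatz.
From Coquelicot Require Import Rcomplements.
Open Scope R_scope.

Lemma ln_le_sub_one t : 0 < t -> ln t <= t - 1.
Proof.
  intros Ht. rewrite <- (ln_exp (t - 1)).
  apply ln_le; [exact Ht|]. pose proof (exp_ineq1_le (t - 1)); lra.
Qed.

Lemma neg_ln_one_sub_le y : 0 <= y <= / 2 -> - ln (1 - y) <= 2 * y.
Proof.
  intros Hy.
  assert (Hinv : / (1 - y) <= 2).
  { rewrite <- (Rinv_inv 2). apply Rinv_le_contravar; lra. }
  assert (Hsplit : / (1 - y) - 1 = y * / (1 - y)) by (field; lra).
  rewrite <- ln_Rinv by lra.
  pose proof (ln_le_sub_one (/ (1 - y)) ltac:(apply Rinv_0_lt_compat; lra)).
  nra.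
Qed.

Lemma one_sub_sqr_le_beta e : 0 <= e <= 1 -> 1 - e ^ 2 <= beta (1 - e).
Proof.
  intros He. unfold beta.
  enough (1 + e - 2 * e ^ 2 <= sqrt ((1 - e) * (4 - 3 * (1 - e)))) by lra.
  destruct (Rle_or_lt (1 + e - 2 * e ^ 2) 0) as [Hneg | Hpos].
  - pose proof (sqrt_pos ((1 - e) * (4 - 3 * (1 - e)))); lra.
  - rewrite <- (sqrt_square (1 + e - 2 * e ^ 2)) by lra.
    apply sqrt_le_1_alt.
    assert (Hcube : 0 <= e ^ 3) by (apply pow_le; lra).
    replace ((1 - e) * (4 - 3 * (1 - e))) with
      ((1 + e - 2 * e ^ 2) * (1 + e - 2 * e ^ 2) + 4 * e ^ 3 * (1 - e)) by ring.
    nra.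
Qed.

Lemma g_le z : exp (- (2 * z)) <= / 2 -> g z <= 2 * exp (- (2 * z)).
Proof.
  intros Hsmall.
  assert (Hsqr : exp (- (2 * z)) = exp (- z) ^ 2).
  { replace (- (2 * z)) with (- z + - z) by ring. rewrite exp_plus. ring. }
  rewrite Hsqr in *. unfold g.
  set (e := exp (- z)) in *.
  assert (He : 0 < e) by apply exp_pos.
  assert (Hbeta : 1 - e ^ 2 <= beta (1 - e)) by (apply one_sub_sqr_le_beta; nra).
  pose proof (ln_le (1 - e ^ 2) (beta (1 - e)) ltac:(lra) Hbeta).
  pose proof (neg_ln_one_sub_le (e ^ 2) ltac:(nra)).
  lra.
Qed.

Lemma Int_part_ge0 r : 0 <= r -> 0 <= IZR (Int_part r).
Proof.
  intros Hr. destruct (base_Int_part r) as [_ Hlow].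
  apply IZR_le. assert (-1 < Int_part r)%Z by (apply lt_IZR; lra). lia.
Qed.

Lemma exp_neg_ln_one_sub p : p < 1 -> exp (- ln (1 - p)) = / (1 - p).
Proof. intros Hp. rewrite exp_Ropp, exp_ln by lra. reflexivity. Qed.

Theorem lemma10 :
  exists C2 : R, forall p : R, 0 < p < / 10 ->
    let q := - ln (1 - p) in
    let B := IZR (Int_part (/ q * ln (/ q))) in
    B * g (B * q / 2) <= C2 * ln (/ q).
Proof.
  exists 3. intros p Hp q B.
  assert (Hexpq : exp q = / (1 - p)) by (apply exp_neg_ln_one_sub; lra).
  assert (Hexpq_bounds : 1 < exp q < 10 / 9).
  { rewrite Hexpq. split.
    - rewrite <- Rinv_1. apply Rinv_lt_contravar; lra.
    - rewrite <- (Rinv_inv (10 / 9)). apply Rinv_lt_contravar; lra. }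
  assert (Hq : 0 < q < / 9).
  { split; [rewrite <- exp_0 in Hexpq_bounds; apply exp_lt_inv; lra|].
    pose proof (exp_ineq1_le q); lra. }
  set (L := ln (/ q)) in *.
  assert (HL : 0 <= L).
  { rewrite <- ln_1. apply ln_le; [lra|].
    rewrite <- Rinv_1. apply Rinv_le_contravar; lra. }
  destruct (base_Int_part (/ q * L)) as [HBx HxB]. fold B in HBx, HxB.
  assert (HB : 0 <= B) by (apply Int_part_ge0, Rmult_le_pos; [apply Rlt_le, Rinv_0_lt_compat|]; lra).
  assert (HqL : / q * L * q = L) by (field; lra).
  assert (HBq : L - q < B * q <= L) by (split; nra).
  assert (Hexp_Bq : exp (- (B * q)) < q * exp q).
  { rewrite <- (exp_ln q) at 2 by lra. rewrite <- exp_plus.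
    apply exp_increasing. unfold L in HBq. rewrite ln_Rinv in HBq by lra. lra. }
  pose proof (g_le (B * q / 2)) as Hg.
  replace (2 * (B * q / 2)) with (B * q) in Hg by field.
  specialize (Hg ltac:(nra)).
  nra.
Qed.
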